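(* Let $\mathbb G_\ell=Z_\ell\otimes I-\mathbb H^\ell$ and $\Phi=(1-\delta)\,\mathbb I_0\otimes I-\mathbb H$. Then the following relations hold in $\mathrm{Hom}_{\mathcal{AB}(\delta)}(1,1)$ for all $\ell\ge 0$: \[ (\mathbb H^{\ell+1})^T-(\mathbb H^\ell)^T\,\Phi-\mathbb G_\ell=0,\qquad (\mathbb H^{\ell+1})^T-\Phi\,(\mathbb H^{\ell})^T-\mathbb G_{\ell}=0 . \] Furthermore, $\mathbb H^k$ and $(\mathbb H^{\ell})^T$ commute for all $k,\ell$.
   Context: $K$ is a commutative ring and $\delta\in K$. $\mathcal{AB}(\delta)$ is the polar (diagrammatic affine) Brauer category: objects are $r\in\mathbb N$, and morphisms $r\to s$ are $K$-linear combinations of polar Brauer diagrams, i.e. Brauer diagrams placed to the right of a vertical thick ''pole'', with horizontal wavy ''connectors'' joining the pole to vertical thin strands; composition is vertical stacking (with the Brauer category relations, a free loop equal to $\delta$). The category admits right tensoring $\otimes$ by ordinary Brauer diagrams (juxtaposition on the right). $\mathbb I_0$ is the pole alone, $I$ is a single thin vertical strand, and $\mathbb H\in\mathrm{Hom}(1,1)$ is the pole with one thin strand joined to it by one connector. The category is subject to the four-term relation $[\mathbb H_{01},\mathbb H_{02}+\mathbb H_{12}]=0$ (where $\mathbb H_{01}=\mathbb H\otimes I$, $\mathbb H_{02}=\mathbb X_0\mathbb H_{01}\mathbb X_0$ with $\mathbb X_0=\mathbb I_0\otimes X$, $X$ the crossing, and $\mathbb H_{12}=\mathbb I_0\otimes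 H$ with $H=X-\cup\circ\cap$) and to skew symmetry $\mathbb H^T=-\mathbb H$. For $\ell\ge0$, $(\mathbb H^\ell)^T\in\mathrm{Hom}(1,1)$ denotes the diagram obtained from $\mathbb H^\ell$ (one thin strand carrying $\ell$ connectors to the pole) by bending the strand so that its upper end runs down (to the right) to the bottom boundary point and its lower end runs up to the top boundary point (the two arcs crossing), the connectors staying attached; in particular $(\mathbb H^0)^T=\mathbb I_0\otimes I$ and skew symmetry reads $(\mathbb H^1)^T=-\mathbb H$. With $\Pi=\mathbb I_0\otimes\cap\in\mathrm{Hom}(2,0)$ and $\amalg=\mathbb I_0\otimes\cup\in\mathrm{Hom}(0,2)$, set $Z_\ell=\Pi(\mathbb H^\ell\otimes I)\amalg\in\mathrm{Hom}_{\mathcal{AB}(\delta)}(0,0)$ (the strand carrying $\ell$ connectors closed into a loop to the right); thus $Z_0=\delta\,\mathbb I_0$ and $\mathbb G_0=(\delta-1)\,\mathbb I_0\otimes I$. *)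

(* A concrete combinatorial model of the polar Brauer
   category AB(delta) : free K-modules on polar Brauer diagrams, modulo the
   two-sided (composition) ideal, stable under right tensoring by Brauer
   diagrams, generated by isotopy, the four-term relation and skew symmetry. *)
From HB Require Import structures.
From mathcomp Require Import all_boot all_order all_algebra.
From mathcomp Require Import freeg.
From Stdlib Require List.

Set Implicit Arguments.
Unset Strict Implicit.
Unset Printing Implicit Defensive.

Import GRing.Theory.

(* A boundary point: (false, i) = i-th bottom point, (true, j) = j-th top *)
(* point (points counted from the pole, starting at 0).                  *)
Definition endpt := (bool * nat)%type.

(* Connectors met along a strand, in the order of traversal.  A connector *)
(* is recorded as (c, s): c is its rank in the height order along the pole *)
(* (0 = lowest), s is the side of the strand on which it is attached      *)
(* (true = on the left of the direction of traversal).                    *)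
Definition clist := seq (nat * bool).

(* An arc (a, l, b): a strand from boundary point a to boundary point b,   *)
(* carrying the connectors l (read from a to b).                           *)
Definition arc := (endpt * clist * endpt)%type.

(* A diagram: arcs, closed loops carrying at least one connector (read in *)
(* some direction from some starting point), and the number of connectors. *)
Definition diag := (seq arc * seq clist * nat)%type.

Definition d_arcs (d : diag) : seq arc := d.1.1.
Definition d_loops (d : diag) : seq clist := d.1.2.
Definition d_n (d : diag) : nat := d.2.

(* reading a strand backwards reverses the list and flips the sides *)
Definition flipl (l : clist) : clist := rev (map (fun p => (p.1, ~~ p.2)) l).

Definition shiftl (n : nat) (l : clist) : clist := map (fun p => (p.1 + n, p.2)) l.

Definition ends (xs : seq arc) : seq endpt := flatten [seq [:: a.1.1; a.2] | a <- xs].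

Definition wf (r s : nat) (d : diag) : bool :=
  [&& perm_eq (ends (d_arcs d))
        ([seq (false, i) | i <- iota 0 r] ++ [seq (true, k) | k <- iota 0 s]),
      perm_eq (map fst (flatten [seq a.1.2 | a <- d_arcs d] ++ flatten (d_loops d)))
        (iota 0 (d_n d))
    & all (fun l => l != [::]) (d_loops d)].

(* Brauer diagrams r -> s (no connectors, hence no loops) *)
Definition wfB (r s : nat) (d : diag) : bool := wf r s d && (d_n d == 0).

Definition arc_eq (a b : arc) : Prop := b = a \/ b = (a.2, flipl a.1.2, a.1.1).
Definition loop_eq (l m : clist) : Prop :=
  exists k, m = rot k l \/ m = rot k (flipl l).
Definition iso (d d' : diag) : Prop :=
  [/\ d_n d = d_n d',
      exists2 xs, List.Forall2 arc_eq (d_arcs d) xs & perm_eq xs (d_arcs d')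
    & exists2 ys, List.Forall2 loop_eq (d_loops d) ys & perm_eq ys (d_loops d')].

Fixpoint orient (xs : seq arc) (e : endpt) : option (clist * endpt) :=
  match xs with
  | [::] => None
  | a :: xs' =>
      if a.1.1 == e then Some (a.1.2, a.2)
      else if a.2 == e then Some (flipl a.1.2, a.1.1)
      else orient xs' e
  end.

(* Follow a strand through the middle points.  [up] : we are at middle   *)
(* point j going up (into g) or down (into f).  Returns the connectors     *)
(* met, the middle points visited, and Some outer endpoint, or None if we *)
(* came back to middle point j0 going up (closed loop).                   *)
Fixpoint trace (fuel : nat) (fa ga : seq arc) (j0 : nat) (up : bool) (j : nat)
  : option (clist * seq nat * option endpt) :=
  match fuel with
  | 0 => None
  | fuel'.+1 =>
    if up then
      match orient ga (false, j) with
      | Some (l, (true, k)) => Some (l, [:: j], Some (true, k))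
      | Some (l, (false, j')) =>
          match trace fuel' fa ga j0 false j' with
          | Some (l', ms, e) => Some (l ++ l', j :: ms, e)
          | None => None
          end
      | None => None
      end
    else
      match orient fa (true, j) with
      | Some (l, (false, i)) => Some (l, [:: j], Some (false, i))
      | Some (l, (true, j')) =>
          if j' == j0 then Some (l, [:: j], None)
          else match trace fuel' fa ga j0 true j' with
               | Some (l', ms, e) => Some (l ++ l', j :: ms, e)
               | None => None
               end
      | None => None
      end
  end.

Definition ekey (e : endpt) : nat := (e.2).*2 + e.1.

(* returns (number of connector-free closed loops created, diagram) *)
Definition dcomp_raw (g f : diag) : nat * diag :=
  let nf := d_n f in
  let fa := d_arcs f in
  let ga := [seq (a.1.1, shiftl nf a.1.2, a.2) | a <- d_arcs g] in
  let fuel := (size fa + size ga).+1 in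
  let starts := [seq e <- ends fa | ~~ e.1] ++ [seq e <- ends ga | e.1] in
  let path (e : endpt) : option arc :=
    if ~~ e.1 then
      match orient fa e with
      | Some (l, (false, i)) => Some (e, l, (false, i))
      | Some (l, (true, j)) =>
          match trace fuel fa ga j true j with
          | Some (l', _, Some e') => Some (e, l ++ l', e')
          | _ => None
          end
      | None => None
      end
    else
      match orient ga e with
      | Some (l, (true, k)) => Some (e, l, (true, k))
      | Some (l, (false, j)) =>
          match trace fuel fa ga j false j with
          | Some (l', _, Some e') => Some (e, l ++ l', e')
          | _ => None
          end
      | None => None
      end in
  let arcs := [seq a <- pmap path starts | ekey a.1.1 < ekey a.2] in
  let mids := [seq e.2 | e <- ends fa & e.1] in
  let loopat (j : nat) : option clist :=
    match trace fuel fa ga j true j with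
    | Some (l, ms, None) => if all (fun m => j <= m) ms then Some l else None
    | _ => None
    end in
  let newloops := pmap loopat mids in
  (count (fun l => l == [::]) newloops,
   (arcs, d_loops f ++ map (shiftl nf) (d_loops g)
            ++ [seq l <- newloops | l != [::]], nf + d_n g)).

Definition dtens_raw (r s : nat) (d b : diag) : diag :=
  let sh (e : endpt) : endpt := (e.1, (if e.1 then s else r) + e.2) in
  (d_arcs d ++ [seq (sh a.1.1, shiftl (d_n d) a.1.2, sh a.2) | a <- d_arcs b],
   d_loops d ++ map (shiftl (d_n d)) (d_loops b), d_n d + d_n b).

Local Open Scope ring_scope.

Definition mor (K : comNzRingType) := {freeg diag / K}.

Definition bas (K : comNzRingType) (d : diag) : mor K := << d >>.

Definition lift2 (K : comNzRingType) (F : diag -> diag -> mor K) (f g : mor K) : mor K :=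
  \sum_(x <- dom f) \sum_(y <- dom g) (coeff x f * coeff y g) *: F x y.

(* a connector-free closed loop evaluates to delta *)
Definition dcomp (K : comNzRingType) (delta : K) (g f : diag) : mor K :=
  let p := dcomp_raw g f in delta ^+ p.1 *: bas K p.2.

(* mcomp g f = g o f  (f first, i.e. f below g) *)
Definition mcomp (K : comNzRingType) (delta : K) (g f : mor K) : mor K :=
  lift2 (dcomp delta) g f.

Definition mtens (K : comNzRingType) (r s : nat) (f b : mor K) : mor K :=
  lift2 (fun x y => bas K (dtens_raw r s x y)) f b.

Definition id0d : diag := ([::], [::], 0%N).                        (* pole alone, 0 -> 0 *)
Definition idd1 : diag := ([:: ((false, 0%N), [::], (true, 0%N))], [::], 0%N).
Definition Hd : diag := ([:: ((false, 0%N), [:: (0%N, true)], (true, 0%N))], [::], 1%N).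
Definition Xd : diag :=
  ([:: ((false, 0%N), [::], (true, 1%N)); ((false, 1%N), [::], (true, 0%N))], [::], 0%N).
Definition cupd : diag := ([:: ((true, 0%N), [::], (true, 1%N))], [::], 0%N).
Definition capd : diag := ([:: ((false, 0%N), [::], (false, 1%N))], [::], 0%N).


Definition I0 (K : comNzRingType) : mor K := bas K id0d.
Definition polar (K : comNzRingType) (b : diag) : mor K := mtens 0 0 (I0 K) (bas K b).

Definition Im1 (K : comNzRingType) : mor K := polar K idd1.
Definition Hm (K : comNzRingType) : mor K := bas K Hd.

Definition Hbr (K : comNzRingType) (delta : K) : mor K :=
  bas K Xd - mcomp delta (bas K cupd) (bas K capd).

Definition H01 (K : comNzRingType) : mor K := mtens 1 1 (Hm K) (bas K idd1).
Definition X0 (K : comNzRingType) : mor K := polar K Xd.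
Definition H02 (K : comNzRingType) (delta : K) : mor K :=
  mcomp delta (X0 K) (mcomp delta (H01 K) (X0 K)).
Definition H12 (K : comNzRingType) (delta : K) : mor K :=
  mtens 0 0 (I0 K) (Hbr delta).

Definition commut (K : comNzRingType) (delta : K) (f g : mor K) : mor K :=
  mcomp delta f g - mcomp delta g f.

Definition fourT (K : comNzRingType) (delta : K) : mor K :=
  commut delta (H01 K) (H02 delta + H12 delta).

Definition capI (K : comNzRingType) : mor K :=
  mtens 0 0 (I0 K) (mtens 2 0 (bas K capd) (bas K idd1)).
Definition cupI (K : comNzRingType) : mor K :=
  mtens 0 0 (I0 K) (mtens 0 2 (bas K cupd) (bas K idd1)).
Definition transp (K : comNzRingType) (delta : K) (f : mor K) : mor K :=
  mcomp delta (capI K) (mcomp delta (mtens 1 1 f (bas K Xd)) (cupI K)).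

Inductive rel_ideal (K : comNzRingType) (delta : K) : nat -> nat -> mor K -> Prop :=
| RI_iso r s d d' : wf r s d -> wf r s d' -> iso d d' ->
    rel_ideal delta r s (bas K d - bas K d')
| RI_4T : rel_ideal delta 2 2 (fourT delta)
| RI_skew : rel_ideal delta 1 1 (transp delta (Hm K) + Hm K)
| RI_add r s f g : rel_ideal delta r s f -> rel_ideal delta r s g ->
    rel_ideal delta r s (f + g)
| RI_scale r s (a : K) f : rel_ideal delta r s f -> rel_ideal delta r s (a *: f)
| RI_compl r s t f d : rel_ideal delta r s f -> wf s t d ->
    rel_ideal delta r t (mcomp delta (bas K d) f)
| RI_compr q r s f d : rel_ideal delta r s f -> wf q r d ->
    rel_ideal delta q s (mcomp delta f (bas K d))
| RI_tens r s r' s' f b : rel_ideal delta r s f -> wfB r' s' b ->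
    rel_ideal delta (r + r') (s + s') (mtens r s f (bas K b)).

Definition ABeq (K : comNzRingType) (delta : K) (r s : nat) (f g : mor K) : Prop :=
  rel_ideal delta r s (f - g).

Definition Hpow (K : comNzRingType) (delta : K) (l : nat) : mor K :=
  iter l (mcomp delta (Hm K)) (Im1 K).
Definition Pi (K : comNzRingType) : mor K := polar K capd.
Definition Amalg (K : comNzRingType) : mor K := polar K cupd.
Definition Zl (K : comNzRingType) (delta : K) (l : nat) : mor K :=
  mcomp delta (Pi K) (mcomp delta (mtens 1 1 (Hpow delta l) (bas K idd1)) (Amalg K)).
Definition Gl (K : comNzRingType) (delta : K) (l : nat) : mor K :=
  mtens 0 0 (Zl delta l) (bas K idd1) - Hpow delta l.
Definition Phi (K : comNzRingType) (delta : K) : mor K :=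
  (1 - delta) *: Im1 K - Hm K.

From mathcomp Require Import all_boot all_order all_algebra.
From mathcomp Require Import freeg zify ring.

Set Implicit Arguments.
Unset Strict Implicit.
Unset Printing Implicit Defensive.

Import GRing.Theory.

(* A diagram of Hom(1,1) made of one strand (and possibly closed loops) is
   determined by the word of connectors met along the strand: composition
   concatenates words, H^l is the word of l connectors on the right of the
   strand, and its transpose is the reversed word with all connectors on the
   left.  Closing the four-term relation into Hom(1,1), by a cup carrying m
   and a cap carrying i connectors, gives A(m, i+1) = A(m+1, i) for an
   explicit three-term combination A; telescoping yields A(0, l) = A(l, 0),
   and skew symmetry applied to the one extra connector turns this into the
   first relation.  Closing the relation the other way round gives the second
   one.  Their difference says that H commutes with (H^l)^T, hence so does
   every H^k. *)

Section LinearExtension.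
Variables (R : comNzRingType) (T : choiceType) (V : lmodType R).
Local Open Scope ring_scope.
Implicit Types (f g : {freeg T / R}) (G : T -> V).

Definition linext G f : V := \sum_(x <- dom f) coeff x f *: G x.

Lemma linextE G f (s : seq T) :
  uniq s -> {subset dom f <= s} -> linext G f = \sum_(x <- s) coeff x f *: G x.
Proof.
move=> uniq_s dom_s; rewrite /linext [RHS](bigID (mem (dom f))) /=.
rewrite [X in _ = _ + X]big1 ?addr0 => [|x /coeff_outdom ->]; last exact: scale0r.
rewrite -[RHS]big_filter; apply/perm_big/uniq_perm; rewrite ?uniq_dom ?filter_uniq //.
by move=> x; rewrite mem_filter; case: (boolP (x \in dom f)) => //= /dom_s ->.
Qed.

Lemma linextD G f g : linext G (f + g) = linext G f + linext G g.
Proof.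
set s := undup (dom f ++ dom g ++ dom (f + g)).
have uniq_s : uniq s by rewrite undup_uniq.
have sub_s h : h \in [:: f; g; f + g] -> {subset dom h <= s}.
  by rewrite !inE => /or3P[] /eqP-> x xh; rewrite mem_undup !mem_cat xh ?orbT.
rewrite (linextE G uniq_s (sub_s (f + g) _)) ?inE ?eqxx ?orbT //.
rewrite (linextE G uniq_s (sub_s f _)) ?inE ?eqxx //.
rewrite (linextE G uniq_s (sub_s g _)) ?inE ?eqxx ?orbT // -big_split /=.
by apply: eq_bigr => x _; rewrite coeffD scalerDl.
Qed.

Lemma linextZ G a f : linext G (a *: f) = a *: linext G f.
Proof.
rewrite (linextE G (uniq_dom f)); last exact: domZ_subset.
by rewrite scaler_sumr; apply: eq_bigr => x _; rewrite coeffZ scalerA.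
Qed.

Lemma linextU G x : linext G << x >> = G x.
Proof. by rewrite /linext domU1 big_seq1 coeffU eqxx mulr1 scale1r. Qed.

Lemma eq_linext G1 G2 f : G1 =1 G2 -> linext G1 f = linext G2 f.
Proof. by move=> eqG; apply: eq_bigr => x _; rewrite eqG. Qed.

Lemma linext_split G1 G2 f :
  linext (fun x => G1 x + G2 x) f = linext G1 f + linext G2 f.
Proof. by rewrite /linext -big_split; apply: eq_bigr => x _; rewrite scalerDr. Qed.

Lemma linext_scale a G f : linext (fun x => a *: G x) f = a *: linext G f.
Proof.
by rewrite /linext scaler_sumr; apply: eq_bigr => x _; rewrite !scalerA mulrC.
Qed.

End LinearExtension.

Section Bilinear.
Variable K : comNzRingType.
Local Open Scope ring_scope.
Implicit Types (f g : mor K) (F : diag -> diag -> mor K).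

Lemma lift2E F f g : lift2 F f g = linext (fun x => linext (F x) g) f.
Proof.
rewrite /lift2 /linext; apply: eq_bigr => x _; rewrite scaler_sumr.
by apply: eq_bigr => y _; rewrite scalerA.
Qed.

Lemma lift2Dl F f1 f2 g : lift2 F (f1 + f2) g = lift2 F f1 g + lift2 F f2 g.
Proof. by rewrite !lift2E linextD. Qed.

Lemma lift2Dr F f g1 g2 : lift2 F f (g1 + g2) = lift2 F f g1 + lift2 F f g2.
Proof. by rewrite !lift2E -linext_split; apply: eq_linext => x; rewrite linextD. Qed.

Lemma lift2Zl F a f g : lift2 F (a *: f) g = a *: lift2 F f g.
Proof. by rewrite !lift2E linextZ. Qed.

Lemma lift2Zr F a f g : lift2 F f (a *: g) = a *: lift2 F f g.
Proof. by rewrite !lift2E -linext_scale; apply: eq_linext => x; rewrite linextZ. Qed.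

Lemma lift2Bl F f1 f2 g : lift2 F (f1 - f2) g = lift2 F f1 g - lift2 F f2 g.
Proof. by rewrite -scaleN1r lift2Dl lift2Zl scaleN1r. Qed.

Lemma lift2Br F f g1 g2 : lift2 F f (g1 - g2) = lift2 F f g1 - lift2 F f g2.
Proof. by rewrite -scaleN1r lift2Dr lift2Zr scaleN1r. Qed.

Lemma lift2_bas F x y : lift2 F (bas K x) (bas K y) = F x y.
Proof. by rewrite lift2E !linextU. Qed.

End Bilinear.

(* [up_run 0 l] is the word of H^l and [down_run 0 l] that of its transpose;
   a connector is (rank along the pole, is it on the left of the strand). *)
Definition up_run a b : clist := [seq (k, true) | k <- iota a b].
Definition down_run a b : clist := [seq (k, false) | k <- rev (iota a b)].

Definition loop_seq (L : clist) : seq clist := [seq x <- [:: L] | x != [::]].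

Lemma fliplK : involutive flipl.
Proof.
move=> w; rewrite /flipl map_rev revK -map_comp.
by rewrite (@eq_map _ _ _ id) ?map_id // => -[a b] /=; rewrite negbK.
Qed.

Lemma flipl_up_run a b : flipl (up_run a b) = down_run a b.
Proof. by rewrite /flipl /up_run /down_run -map_comp -map_rev. Qed.

Lemma flipl_down_run a b : flipl (down_run a b) = up_run a b.
Proof. by rewrite -flipl_up_run fliplK. Qed.

Lemma shiftl0 w : shiftl 0 w = w.
Proof. by rewrite /shiftl (@eq_map _ _ _ id) ?map_id // => -[a b] /=; rewrite addn0. Qed.

Lemma shiftl_flipl n w : shiftl n (flipl w) = flipl (shiftl n w).
Proof. by rewrite /shiftl /flipl map_rev -!map_comp. Qed.

Lemma shiftl_cat n w1 w2 : shiftl n (w1 ++ w2) = shiftl n w1 ++ shiftl n w2.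
Proof. exact: map_cat. Qed.

Lemma shiftl_seq1 n a s : shiftl n [:: (a, s)] = [:: (a + n, s)].
Proof. by []. Qed.

Lemma shiftl_up_run n a b : shiftl n (up_run a b) = up_run (a + n) b.
Proof. by elim: b a => //= b IHb a; rewrite IHb addSn. Qed.

Lemma shiftl_down_run n a b : shiftl n (down_run a b) = down_run (a + n) b.
Proof. by rewrite -!flipl_up_run shiftl_flipl shiftl_up_run. Qed.

Lemma up_run0 a : up_run a 0 = [::]. Proof. by []. Qed.
Lemma down_run0 a : down_run a 0 = [::]. Proof. by []. Qed.

Lemma up_run_cons a b : up_run a b.+1 = (a, true) :: up_run a.+1 b.
Proof. by []. Qed.

Lemma up_run_rcons a b : up_run a b.+1 = up_run a b ++ [:: (a + b, true)].
Proof. by rewrite /up_run -addn1 iotaD map_cat. Qed.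

Lemma down_run_cons a b : down_run a b.+1 = (a + b, false) :: down_run a b.
Proof. by rewrite /down_run -addn1 iotaD rev_cat. Qed.

Lemma down_run_rcons a b : down_run a b.+1 = down_run a.+1 b ++ [:: (a, false)].
Proof. by rewrite /down_run /= rev_cons map_rcons cats1. Qed.

Lemma map_fst_up_run a b : map fst (up_run a b) = iota a b.
Proof. by rewrite /up_run -map_comp map_id. Qed.

Lemma map_fst_down_run a b : map fst (down_run a b) = rev (iota a b).
Proof. by rewrite /down_run -map_comp map_id. Qed.

Lemma rot_up_run m : rot m (up_run 0 m.+1) = (m, true) :: up_run 0 m.
Proof.
have size_run : size (up_run 0 m) = m by rewrite size_map size_iota.
by rewrite up_run_rcons -{1}size_run rot_size_cat.
Qed.

Lemma perm_iota_rev_cat m j : perm_eq (rev (iota 0 m) ++ iota m j) (iota 0 (m + j)).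
Proof. by rewrite iotaD add0n perm_cat2r perm_rev. Qed.

Lemma perm_iota_cat_rev m j : perm_eq (rev (iota m j) ++ iota 0 m) (iota 0 (m + j)).
Proof. by rewrite iotaD add0n perm_catC perm_cat2l perm_rev. Qed.

Lemma flatten_loop_seq L : flatten (loop_seq L) = L.
Proof. by case: L => //= x s; rewrite cats0. Qed.

Lemma loop_seq_nonempty L : all (fun l => l != [::]) (loop_seq L).
Proof. by case: L. Qed.

Lemma loop_seq_nonnil L : L != [::] -> loop_seq L = [:: L].
Proof. by case: L. Qed.

Definition strand_loops (w : clist) (Ls : seq clist) (n : nat) : diag :=
  ([:: ((false, 0), w, (true, 0))], Ls, n).
Definition strand (w : clist) (n : nat) : diag := strand_loops w [::] n.

Definition H01d := dtens_raw 1 1 Hd idd1.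
Definition X0d := dtens_raw 0 0 id0d Xd.
Definition H02d := (dcomp_raw X0d (dcomp_raw H01d X0d).2).2.
Definition CCd := dtens_raw 0 0 id0d (dcomp_raw cupd capd).2.
Definition H01H02d := (dcomp_raw H01d H02d).2.
Definition H01X0d := (dcomp_raw H01d X0d).2.
Definition H01CCd := (dcomp_raw H01d CCd).2.
Definition H02H01d := (dcomp_raw H02d H01d).2.
Definition X0H01d := (dcomp_raw X0d H01d).2.
Definition CCH01d := (dcomp_raw CCd H01d).2.

Definition capId := dtens_raw 0 0 id0d (dtens_raw 2 0 capd idd1).
Definition cupId := dtens_raw 0 0 id0d (dtens_raw 0 2 cupd idd1).
Definition Pid := dtens_raw 0 0 id0d capd.
Definition Amalgd := dtens_raw 0 0 id0d cupd.
Definition id2d : diag :=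
  ([:: ((false, 0), [::], (true, 0)); ((false, 1), [::], (true, 1))], [::], 0).

Definition comp3 (top mid bot : diag) : nat * diag :=
  let a := dcomp_raw mid bot in let b := dcomp_raw top a.2 in (a.1 + b.1, b.2).

Definition sandwich_raw (r : nat) (b F top bot : diag) : nat * diag :=
  comp3 top (dtens_raw r r F b) bot.

(* Two closures of a diagram F : 2 -> 2 into Hom(1,1), through [F (x) I]:
   strand 0 of F is run downwards between a cap carrying q and a cup carrying
   p, and strand 1 of F is run before ([lo_]) or after ([hi_]) that part. *)
Definition lo_bot (p : clist) m : diag :=
  ([:: ((false, 0), [::], (true, 1)); ((true, 0), p, (true, 2))], [::], m).
Definition lo_top (q : clist) i : diag :=
  ([:: ((false, 1), q, (false, 0)); ((false, 2), [::], (true, 0))], [::], i).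
Definition hi_bot (p : clist) m : diag :=
  ([:: ((false, 0), [::], (true, 2)); ((true, 0), p, (true, 1))], [::], m).
Definition hi_top (q : clist) i : diag :=
  ([:: ((false, 2), q, (false, 0)); ((false, 1), [::], (true, 0))], [::], i).

(* Two ways of splicing a diagram f : 1 -> 1 into a word, through [f (x) I (x) I]:
   before ([front_]) or after ([back_]) the rest of the word. *)
Definition front_bot (p : clist) m : diag :=
  ([:: ((false, 0), [::], (true, 0)); ((true, 1), p, (true, 2))], [::], m).
Definition front_top : diag :=
  ([:: ((false, 0), [::], (false, 1)); ((false, 2), [::], (true, 0))], [::], 0).
Definition back_bot : diag :=
  ([:: ((false, 0), [::], (true, 1)); ((true, 2), [::], (true, 0))], [::], 0).
Definition back_top (q : clist) i : diag :=
  ([:: ((false, 1), q, (false, 2)); ((false, 0), [::], (true, 0))], [::], i).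

Ltac compute_diagram :=
  rewrite /sandwich_raw /comp3 /dcomp_raw /= ?cats0 ?addn0 ?add0n.

Section RawEvaluation.
Variables (p q : clist) (m i : nat).

Lemma lo_H01H02_raw : sandwich_raw 2 idd1 H01H02d (lo_top q i) (lo_bot p m) =
  (0, strand ((m, true) :: shiftl (m + 2) q ++ (m.+1, false) :: p) (m + 2 + i)).
Proof. by compute_diagram. Qed.

Lemma lo_H01X0_raw : sandwich_raw 2 idd1 H01X0d (lo_top q i) (lo_bot p m) =
  (0, strand ((m, true) :: flipl (shiftl (m + 1) q) ++ p) (m + 1 + i)).
Proof. by compute_diagram. Qed.

Lemma lo_H01CC_raw : let L := flipl (shiftl (m + 1) q) ++ [:: (m, true)] in
  sandwich_raw 2 idd1 H01CCd (lo_top q i) (lo_bot p m) =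
  (nat_of_bool (L == [::]), strand_loops p (loop_seq L) (m + 1 + i)).
Proof. by compute_diagram. Qed.

Lemma lo_H02H01_raw : sandwich_raw 2 idd1 H02H01d (lo_top q i) (lo_bot p m) =
  (0, strand ((m.+1, true) :: shiftl (m + 2) q ++ (m, false) :: p) (m + 2 + i)).
Proof. by compute_diagram. Qed.

Lemma lo_X0H01_raw : sandwich_raw 2 idd1 X0H01d (lo_top q i) (lo_bot p m) =
  (0, strand (flipl (shiftl (m + 1) q) ++ (m, false) :: p) (m + 1 + i)).
Proof. by compute_diagram. Qed.

Lemma lo_CCH01_raw : let L := flipl (shiftl (m + 1) q) in
  sandwich_raw 2 idd1 CCH01d (lo_top q i) (lo_bot p m) =
  (nat_of_bool (L == [::]), strand_loops ((m, false) :: p) (loop_seq L) (m + 1 + i)).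
Proof. by compute_diagram. Qed.

Lemma hi_H01H02_raw : sandwich_raw 2 idd1 H01H02d (hi_top q i) (hi_bot p m) =
  (0, strand (shiftl (m + 2) q ++ (m.+1, false) :: p ++ [:: (m, true)]) (m + 2 + i)).
Proof. by compute_diagram. Qed.

Lemma hi_H01X0_raw : sandwich_raw 2 idd1 H01X0d (hi_top q i) (hi_bot p m) =
  (0, strand (shiftl (m + 1) q ++ (m, false) :: flipl p) (m + 1 + i)).
Proof. by compute_diagram. Qed.

Lemma hi_H01CC_raw : sandwich_raw 2 idd1 H01CCd (hi_top q i) (hi_bot p m) =
  (nat_of_bool (flipl p == [::]),
   strand_loops (shiftl (m + 1) q ++ [:: (m, false)]) (loop_seq (flipl p)) (m + 1 + i)).
Proof. by compute_diagram; congr (_, _); case: (_ == _). Qed.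

Lemma hi_H02H01_raw : sandwich_raw 2 idd1 H02H01d (hi_top q i) (hi_bot p m) =
  (0, strand (shiftl (m + 2) q ++ (m, false) :: p ++ [:: (m.+1, true)]) (m + 2 + i)).
Proof. by compute_diagram. Qed.

Lemma hi_X0H01_raw : sandwich_raw 2 idd1 X0H01d (hi_top q i) (hi_bot p m) =
  (0, strand (shiftl (m + 1) q ++ flipl p ++ [:: (m, true)]) (m + 1 + i)).
Proof. by compute_diagram. Qed.

Lemma hi_CCH01_raw : sandwich_raw 2 idd1 CCH01d (hi_top q i) (hi_bot p m) =
  (0, strand_loops (shiftl (m + 1) q) [:: (m, true) :: flipl p] (m + 1 + i)).
Proof. by compute_diagram. Qed.

Lemma front_raw s : sandwich_raw 1 id2d (strand [:: (0, s)] 1) front_top (front_bot p m) =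
  (0, strand ((m, s) :: p) (m + 1)).
Proof. by compute_diagram. Qed.

Lemma back_raw s : sandwich_raw 1 id2d (strand [:: (0, s)] 1) (back_top q i) back_bot =
  (0, strand (shiftl 1 q ++ [:: (0, s)]) (1 + i)).
Proof. by compute_diagram; rewrite negbK. Qed.

End RawEvaluation.

Lemma transp_raw w n :
  comp3 capId (dtens_raw 1 1 (strand w n) Xd) cupId = (0, strand (flipl w) n).
Proof. by rewrite /comp3 /dcomp_raw /= ?cats0 ?addn0 ?add0n shiftl0. Qed.

Lemma close_raw w n :
  comp3 Pid (dtens_raw 1 1 (strand w n) idd1) Amalgd =
  (nat_of_bool (w == [::]), ([::], loop_seq w, n)).
Proof. by rewrite /comp3 /dcomp_raw /= cats0 shiftl0 fliplK !(addn0, add0n). Qed.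

Lemma strand_loops_comp w1 Ls1 n1 w2 Ls2 n2 :
  dcomp_raw (strand_loops w1 Ls1 n1) (strand_loops w2 Ls2 n2) =
  (0, strand_loops (w2 ++ shiftl n2 w1) (Ls2 ++ map (shiftl n2) Ls1) (n2 + n1)).
Proof. by rewrite /dcomp_raw /= ?cats0. Qed.

(* Closed-up forms of the terms H01 H02, H01 X0 and H01 (cup o cap) of the
   four-term relation, with m connectors from the cup and j from the cap. *)
Definition lo_HH m j := strand ((m, true) :: down_run m.+1 j ++ down_run 0 m) (m + j).+1.
Definition lo_HX m j := strand (up_run m j ++ down_run 0 m) (m + j).
Definition hi_HH m j := strand (down_run m.+1 j ++ down_run 0 m ++ [:: (m, true)]) (m + j).+1.
Definition hi_HX m j := strand (down_run m j ++ up_run 0 m) (m + j).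

Lemma Forall2_refl (A : Type) (P : A -> A -> Prop) (s : seq A) :
  (forall x, P x x) -> List.Forall2 P s s.
Proof. by move=> Prefl; elim: s => [|x s IHs]; constructor. Qed.

Lemma iso_refl d : iso d d.
Proof.
split=> //; first by exists (d_arcs d) => //; apply: Forall2_refl; left.
by exists (d_loops d) => //; apply: Forall2_refl => l; exists 0; left; rewrite rot0.
Qed.

Lemma wf_strand_loops w Ls n :
  perm_eq (map fst (w ++ flatten Ls)) (iota 0 n) -> all (fun l => l != [::]) Ls ->
  wf 1 1 (strand_loops w Ls n).
Proof. by move=> perm_w nonempty_Ls; apply/and3P; split=> //=; rewrite cats0. Qed.

Lemma wf_strand_up_run k : wf 1 1 (strand (up_run 0 k) k).
Proof. by apply: wf_strand_loops; rewrite // cats0 map_fst_up_run. Qed.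

Ltac wf_context := apply/and3P; split=> //=; rewrite !cats0 map_fst_down_run perm_rev.

Lemma wf_lo_bot m : wf 1 3 (lo_bot (down_run 0 m) m). Proof. by wf_context. Qed.
Lemma wf_lo_top i : wf 3 1 (lo_top (down_run 0 i) i). Proof. by wf_context. Qed.
Lemma wf_hi_bot m : wf 1 3 (hi_bot (down_run 0 m) m). Proof. by wf_context. Qed.
Lemma wf_hi_top i : wf 3 1 (hi_top (down_run 0 i) i). Proof. by wf_context. Qed.
Lemma wf_front_bot m : wf 1 3 (front_bot (down_run 0 m) m). Proof. by wf_context. Qed.
Lemma wf_back_top i : wf 3 1 (back_top (down_run 0 i) i). Proof. by wf_context. Qed.

Ltac freeg_ring := apply/eqP/freeg_eqP => ?; rewrite ?(coeffD, coeffN, coeffZ); ring.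

Section PolarBrauer.
Variables (K : comNzRingType) (delta : K).
Local Open Scope ring_scope.
Local Notation bas := (bas K).
Local Notation mcomp := (mcomp delta).
Implicit Types (f g : mor K).

Lemma mcomp_bas y x :
  mcomp (bas y) (bas x) = delta ^+ (dcomp_raw y x).1 *: bas (dcomp_raw y x).2.
Proof. exact: lift2_bas. Qed.

Lemma mtens_bas r s x y : mtens r s (bas x) (bas y) = bas (dtens_raw r s x y).
Proof. exact: lift2_bas. Qed.

Lemma mcompDl f1 f2 g : mcomp (f1 + f2) g = mcomp f1 g + mcomp f2 g.
Proof. exact: lift2Dl. Qed.
Lemma mcompDr f g1 g2 : mcomp f (g1 + g2) = mcomp f g1 + mcomp f g2.
Proof. exact: lift2Dr. Qed.
Lemma mcompBl f1 f2 g : mcomp (f1 - f2) g = mcomp f1 g - mcomp f2 g.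
Proof. exact: lift2Bl. Qed.
Lemma mcompBr f g1 g2 : mcomp f (g1 - g2) = mcomp f g1 - mcomp f g2.
Proof. exact: lift2Br. Qed.
Lemma mcompZl a f g : mcomp (a *: f) g = a *: mcomp f g.
Proof. exact: lift2Zl. Qed.
Lemma mcompZr a f g : mcomp f (a *: g) = a *: mcomp f g.
Proof. exact: lift2Zr. Qed.
Lemma mtensDl r s f1 f2 g : mtens r s (f1 + f2) g = mtens r s f1 g + mtens r s f2 g.
Proof. exact: lift2Dl. Qed.
Lemma mtensBl r s f1 f2 g : mtens r s (f1 - f2) g = mtens r s f1 g - mtens r s f2 g.
Proof. exact: lift2Bl. Qed.
Lemma mtensBr r s f g1 g2 : mtens r s f (g1 - g2) = mtens r s f g1 - mtens r s f g2.
Proof. exact: lift2Br. Qed.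
Lemma mtensZl r s a f g : mtens r s (a *: f) g = a *: mtens r s f g.
Proof. exact: lift2Zl. Qed.

Lemma mcomp_bas_noloop y x :
  (dcomp_raw y x).1 = 0%N -> mcomp (bas y) (bas x) = bas (dcomp_raw y x).2.
Proof. by move=> no_loop; rewrite mcomp_bas no_loop expr0 scale1r. Qed.

Lemma mcomp3_bas top mid bot k d : comp3 top mid bot = (k, d) ->
  mcomp (bas top) (mcomp (bas mid) (bas bot)) = delta ^+ k *: bas d.
Proof. by rewrite mcomp_bas mcompZr mcomp_bas scalerA -exprD /comp3 => -[<- <-]. Qed.

Lemma mcomp_strand w1 n1 w2 n2 :
  mcomp (bas (strand w1 n1)) (bas (strand w2 n2)) =
  bas (strand (w2 ++ shiftl n2 w1) (n2 + n1)).
Proof. by rewrite mcomp_bas_noloop strand_loops_comp. Qed.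

Lemma mcomp_Hm_strand w n :
  mcomp (Hm K) (bas (strand w n)) = bas (strand (w ++ [:: (n, true)]) n.+1).
Proof. by rewrite mcomp_strand addn1. Qed.

Lemma Im1_strand : Im1 K = bas (strand [::] 0).
Proof. by rewrite /Im1 /polar /I0 mtens_bas. Qed.

Lemma Hm_strand : Hm K = bas (strand [:: (0%N, true)] 1).
Proof. by []. Qed.

Lemma Hpow_strand l : Hpow delta l = bas (strand (up_run 0 l) l).
Proof.
elim: l => [|l IHl]; first exact: Im1_strand.
by rewrite /Hpow iterS -/(Hpow delta l) IHl Hm_strand mcomp_strand up_run_rcons addn1.
Qed.

Lemma transp_strand w n : transp delta (bas (strand w n)) = bas (strand (flipl w) n).
Proof.
rewrite /transp /capI /cupI !mtens_bas (mcomp3_bas (transp_raw w n)).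
by rewrite expr0 scale1r.
Qed.

Lemma transp_Hpow l : transp delta (Hpow delta l) = bas (strand (down_run 0 l) l).
Proof. by rewrite Hpow_strand transp_strand flipl_up_run. Qed.

(* a connector-free closed loop is not recorded in a diagram but evaluated to delta *)
Definition loop_term w L n : mor K :=
  delta ^+ (L == [::]) *: bas (strand_loops w (loop_seq L) n).

Lemma Zl_tens_I l : mtens 0 0 (Zl delta l) (bas idd1) = loop_term [::] (up_run 0 l) l.
Proof.
rewrite /Zl /Pi /Amalg /polar /I0 !mtens_bas Hpow_strand mtens_bas.
rewrite (mcomp3_bas (close_raw _ _)) mtensZl mtens_bas.
congr (_ *: bas _); rewrite /dtens_raw /d_loops /strand_loops /= cats0.
by congr (_, _); apply: addn0.
Qed.

Lemma transp_Hpow_Phi l :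
  mcomp (transp delta (Hpow delta l)) (Phi delta) =
  (1 - delta) *: bas (strand (down_run 0 l) l) - bas (strand ((0%N, true) :: down_run 1 l) l.+1).
Proof.
rewrite transp_Hpow /Phi mcompBr mcompZr Im1_strand Hm_strand !mcomp_strand.
by rewrite shiftl0 shiftl_down_run.
Qed.

Lemma Phi_transp_Hpow l :
  mcomp (Phi delta) (transp delta (Hpow delta l)) =
  (1 - delta) *: bas (strand (down_run 0 l) l) - bas (strand (down_run 0 l ++ [:: (l, true)]) l.+1).
Proof.
rewrite transp_Hpow /Phi mcompBl mcompZl Im1_strand Hm_strand !mcomp_strand.
by rewrite cats0 addn0 addn1.
Qed.

Section Equivalence.
Variables r s : nat.

Lemma ABeq_sym f g : ABeq delta r s f g -> ABeq delta r s g f.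
Proof. by move=> /(RI_scale (-1)); rewrite /ABeq scaleN1r opprB. Qed.

Lemma ABeq_comb f1 f2 f g :
  rel_ideal delta r s f1 -> rel_ideal delta r s f2 -> f - g = f1 + f2 ->
  ABeq delta r s f g.
Proof. by rewrite /ABeq => eq1 eq2 ->; apply: RI_add. Qed.

Lemma ABeq_trans f g h : ABeq delta r s f g -> ABeq delta r s g h -> ABeq delta r s f h.
Proof. by move=> eq_fg eq_gh; apply: ABeq_comb eq_fg eq_gh _; rewrite addrA subrK. Qed.

End Equivalence.

Lemma ABeq_refl f : ABeq delta 1 1 f f.
Proof.
rewrite /ABeq subrr -(subrr (bas (strand [::] 0))).
by apply: RI_iso => //; apply: iso_refl.
Qed.

Lemma ABeq_telescope (A : nat -> nat -> mor K) l :
  (forall m i, ABeq delta 1 1 (A m i.+1) (A m.+1 i)) -> ABeq delta 1 1 (A 0%N l) (A l 0%N).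
Proof.
move=> stepA.
suff /(_ l (leqnn l)) : forall k, (k <= l)%N -> ABeq delta 1 1 (A 0%N l) (A k (l - k)%N).
  by rewrite subnn.
elim=> [|k IHk] lt_k_l; first by rewrite subn0; apply: ABeq_refl.
apply: ABeq_trans (IHk (ltnW lt_k_l)) _.
by rewrite -subnSK //; apply: stepA.
Qed.

Lemma ABeq_loop_rot w L n k : perm_eq (map fst (w ++ L)) (iota 0 n) ->
  ABeq delta 1 1 (loop_term w (rot k L) n) (loop_term w L n).
Proof.
move=> perm_wL; rewrite /ABeq /loop_term.
have -> : (rot k L == [::]) = (L == [::]) by rewrite -!size_eq0 size_rot.
rewrite -scalerBr; apply/RI_scale/RI_iso.
- apply: wf_strand_loops; rewrite ?loop_seq_nonempty // flatten_loop_seq.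
  by apply: perm_trans perm_wL; apply: perm_map; rewrite perm_cat2l perm_rot.
- by apply: wf_strand_loops; rewrite ?loop_seq_nonempty // flatten_loop_seq.
split=> //; first by exists (d_arcs (strand_loops w (loop_seq (rot k L)) n)) => //;
  apply: Forall2_refl; left.
exists (loop_seq L) => //.
case: L {perm_wL} => [|x L]; first by constructor.
have rot_nonnil : rot k (x :: L) != [::] by rewrite -size_eq0 size_rot.
rewrite /= (loop_seq_nonnil rot_nonnil); constructor => //.
by exists (size (rot k (x :: L)) - k)%N; left; symmetry; apply: rotK.
Qed.

Definition sandwich (r : nat) (b top bot : diag) (f : mor K) : mor K :=
  mcomp (bas top) (mcomp (mtens r r f (bas b)) (bas bot)).

Lemma sandwichD r b top bot f g :
  sandwich r b top bot (f + g) = sandwich r b top bot f + sandwich r b top bot g.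
Proof. by rewrite /sandwich mtensDl mcompDl mcompDr. Qed.

Lemma sandwichB r b top bot f g :
  sandwich r b top bot (f - g) = sandwich r b top bot f - sandwich r b top bot g.
Proof. by rewrite /sandwich mtensBl mcompBl mcompBr. Qed.

Lemma sandwich_bas r b top bot F k d : sandwich_raw r b F top bot = (k, d) ->
  sandwich r b top bot (bas F) = delta ^+ k *: bas d.
Proof. by rewrite /sandwich mtens_bas; apply: mcomp3_bas. Qed.

Lemma rel_ideal_sandwich r r' b top bot f :
  rel_ideal delta r r f -> wfB r' r' b -> wf (r + r') 1 top -> wf 1 (r + r') bot ->
  rel_ideal delta 1 1 (sandwich r b top bot f).
Proof. by move=> rel_f wf_b wf_top wf_bot; apply/RI_compl/wf_top/RI_compr/wf_bot/RI_tens. Qed.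

Lemma H01_bas : H01 K = bas H01d.
Proof. by rewrite /H01 mtens_bas. Qed.

Lemma X0_bas : X0 K = bas X0d.
Proof. by rewrite /X0 /polar /I0 mtens_bas. Qed.

Lemma H02_bas : H02 delta = bas H02d.
Proof.
have no_loop : comp3 X0d H01d X0d = (0%N, H02d) by vm_compute.
by rewrite /H02 X0_bas H01_bas (mcomp3_bas no_loop) expr0 scale1r.
Qed.

Lemma H12_bas : H12 delta = bas X0d - bas CCd.
Proof.
rewrite /H12 /Hbr mcomp_bas_noloop; last by vm_compute.
by rewrite mtensBr /I0 !mtens_bas.
Qed.

Lemma fourT_bas : fourT delta =
  (bas H01H02d + (bas H01X0d - bas H01CCd)) - (bas H02H01d + (bas X0H01d - bas CCH01d)).
Proof.
rewrite /fourT /commut H02_bas H12_bas H01_bas mcompDr mcompBr mcompDl mcompBl.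
by rewrite !mcomp_bas_noloop //; vm_compute.
Qed.

(* Stated for abstract summands and instantiated by hand: matching a pattern
   [_ - _] against a concrete morphism makes unification unfold the addition
   of the free module. *)
Lemma sandwich_comb r b top bot f1 f2 f3 f4 f5 f6 : let S := sandwich r b top bot in
  S ((f1 + (f2 - f3)) - (f4 + (f5 - f6))) = (S f1 + (S f2 - S f3)) - (S f4 + (S f5 - S f6)).
Proof.
rewrite /= (sandwichB _ _ _ _ (f1 + _)) (sandwichD _ _ _ _ f1) (sandwichD _ _ _ _ f4).
by rewrite (sandwichB _ _ _ _ f2) (sandwichB _ _ _ _ f5).
Qed.

Lemma ABeq_closed_fourT r b top bot w1 v1 u1 w2 v2 u2 :
  let S := sandwich r b top bot in
  rel_ideal delta 1 1 (S (fourT delta)) ->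
  S (bas H01H02d) = w1 -> S (bas H01X0d) = v1 -> S (bas H01CCd) = u1 ->
  S (bas H02H01d) = w2 -> S (bas X0H01d) = v2 -> S (bas CCH01d) = u2 ->
  ABeq delta 1 1 (w1 + (v1 - u1)) (w2 + (v2 - u2)).
Proof. by move=> S; rewrite /S fourT_bas sandwich_comb => + <- <- <- <- <- <-. Qed.


Lemma skew_bas :
  transp delta (Hm K) + Hm K = bas (strand [:: (0%N, false)] 1) + bas (strand [:: (0%N, true)] 1).
Proof. by rewrite Hm_strand transp_strand. Qed.

Lemma skew_front l :
  ABeq delta 1 1 (bas (strand ((l, false) :: down_run 0 l) l.+1))
                 (- bas (strand ((l, true) :: down_run 0 l) l.+1)).
Proof.
have := rel_ideal_sandwich (RI_skew delta) (isT : wfB 2 2 id2d) (isT : wf 3 1 front_top)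
  (wf_front_bot l).
rewrite skew_bas sandwichD !(sandwich_bas (front_raw _ _ _)) expr0 !scale1r addn1.
by rewrite /ABeq opprK.
Qed.

Lemma skew_back l :
  ABeq delta 1 1 (bas (strand (down_run 1 l ++ [:: (0%N, false)]) l.+1))
                 (- bas (strand (down_run 1 l ++ [:: (0%N, true)]) l.+1)).
Proof.
have := rel_ideal_sandwich (RI_skew delta) (isT : wfB 2 2 id2d) (wf_back_top l)
  (isT : wf 1 3 back_bot).
rewrite skew_bas sandwichD !(sandwich_bas (back_raw _ _ _)) expr0 !scale1r.
by rewrite shiftl_down_run add1n /ABeq opprK.
Qed.

Local Notation lo_ctx m i := (sandwich 2 idd1 (lo_top (down_run 0 i) i) (lo_bot (down_run 0 m) m)).

Definition lo_HC m j := loop_term (down_run 0 m) (up_run m j) (m + j)%N.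
Definition lo_sum m j := bas (lo_HH m j) + (bas (lo_HX m j) - lo_HC m j).

Lemma lo_ctx_H01H02 m i : lo_ctx m i (bas H01H02d) = bas (lo_HH m i.+1).
Proof.
rewrite (sandwich_bas (lo_H01H02_raw _ _ _ _)) expr0 scale1r /lo_HH.
rewrite shiftl_down_run add0n addn2 down_run_rcons -catA /=.
by congr (bas (strand _ _)); lia.
Qed.

Lemma lo_ctx_H01X0 m i : lo_ctx m i (bas H01X0d) = bas (lo_HX m i.+1).
Proof.
rewrite (sandwich_bas (lo_H01X0_raw _ _ _ _)) expr0 scale1r /lo_HX.
rewrite shiftl_down_run add0n flipl_down_run addn1 up_run_cons.
by congr (bas (strand _ _)); lia.
Qed.

Lemma lo_ctx_H01CC m i :
  lo_ctx m i (bas H01CCd) = loop_term (down_run 0 m) (rot 1 (up_run m i.+1)) (m + i.+1)%N.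
Proof.
rewrite (sandwich_bas (lo_H01CC_raw _ _ _ _)) /loop_term.
rewrite shiftl_down_run add0n flipl_down_run addn1 up_run_cons rot1_cons cats1.
by congr (_ *: bas (strand_loops _ _ _)); lia.
Qed.

Lemma lo_ctx_H02H01 m i : lo_ctx m i (bas H02H01d) = bas (lo_HH m.+1 i).
Proof.
rewrite (sandwich_bas (lo_H02H01_raw _ _ _ _)) expr0 scale1r /lo_HH.
rewrite shiftl_down_run add0n addn2 down_run_cons add0n.
by congr (bas (strand _ _)); lia.
Qed.

Lemma lo_ctx_X0H01 m i : lo_ctx m i (bas X0H01d) = bas (lo_HX m.+1 i).
Proof.
rewrite (sandwich_bas (lo_X0H01_raw _ _ _ _)) expr0 scale1r /lo_HX.
rewrite shiftl_down_run add0n flipl_down_run addn1 down_run_cons add0n.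
by congr (bas (strand _ _)); lia.
Qed.

Lemma lo_ctx_CCH01 m i : lo_ctx m i (bas CCH01d) = lo_HC m.+1 i.
Proof.
rewrite (sandwich_bas (lo_CCH01_raw _ _ _ _)) /lo_HC /loop_term.
by rewrite shiftl_down_run add0n flipl_down_run addn1 down_run_cons add0n.
Qed.

Lemma lo_step m i : ABeq delta 1 1 (lo_sum m i.+1) (lo_sum m.+1 i).
Proof.
have fourT_lo := ABeq_closed_fourT
  (rel_ideal_sandwich (RI_4T delta) (isT : wfB 1 1 idd1) (wf_lo_top i) (wf_lo_bot m))
  (lo_ctx_H01H02 m i) (lo_ctx_H01X0 m i) (lo_ctx_H01CC m i)
  (lo_ctx_H02H01 m i) (lo_ctx_X0H01 m i) (lo_ctx_CCH01 m i).
have rot_lo : ABeq delta 1 1 (loop_term (down_run 0 m) (rot 1 (up_run m i.+1)) (m + i.+1)%N)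
                             (lo_HC m i.+1).
  apply: ABeq_loop_rot.
  by rewrite map_cat map_fst_down_run map_fst_up_run perm_iota_rev_cat.
by apply: ABeq_comb fourT_lo rot_lo _; rewrite /lo_sum; freeg_ring.
Qed.

Lemma lo_sum_0l l :
  lo_sum 0 l = bas (strand ((0%N, true) :: down_run 1 l) l.+1)
               + (bas (strand (up_run 0 l) l) - loop_term [::] (up_run 0 l) l).
Proof. by rewrite /lo_sum /lo_HH /lo_HX /lo_HC !down_run0 !cats0. Qed.

Lemma lo_sum_l0 l :
  lo_sum l 0 = bas (strand ((l, true) :: down_run 0 l) l.+1)
               + (bas (strand (down_run 0 l) l) - delta *: bas (strand (down_run 0 l) l)).
Proof. by rewrite /lo_sum /lo_HH /lo_HX /lo_HC /loop_term !down_run0 !up_run0 !addn0 expr1. Qed.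

Lemma transp_Hpow_Phi_rel l :
  ABeq delta 1 1
    (transp delta (Hpow delta l.+1) - mcomp (transp delta (Hpow delta l)) (Phi delta) - Gl delta l) 0.
Proof.
rewrite /Gl transp_Hpow_Phi transp_Hpow Zl_tens_I Hpow_strand down_run_cons add0n.
apply: ABeq_comb (skew_front l) (ABeq_telescope l lo_step) _.
by rewrite lo_sum_0l lo_sum_l0; freeg_ring.
Qed.

Local Notation hi_ctx m i := (sandwich 2 idd1 (hi_top (down_run 0 i) i) (hi_bot (down_run 0 m) m)).

Definition hi_HC m j := loop_term (down_run m j) (up_run 0 m) (m + j)%N.
Definition hi_sum m j := bas (hi_HH m j) + (bas (hi_HX m j) - hi_HC m j).

Lemma hi_ctx_H01H02 m i : hi_ctx m i (bas H01H02d) = bas (hi_HH m i.+1).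
Proof.
rewrite (sandwich_bas (hi_H01H02_raw _ _ _ _)) expr0 scale1r /hi_HH.
rewrite shiftl_down_run add0n addn2 down_run_rcons -catA cat1s.
by congr (bas (strand _ _)); lia.
Qed.

Lemma hi_ctx_H01X0 m i : hi_ctx m i (bas H01X0d) = bas (hi_HX m i.+1).
Proof.
rewrite (sandwich_bas (hi_H01X0_raw _ _ _ _)) expr0 scale1r /hi_HX.
rewrite shiftl_down_run add0n flipl_down_run addn1 down_run_rcons -catA cat1s.
by congr (bas (strand _ _)); lia.
Qed.

Lemma hi_ctx_H01CC m i : hi_ctx m i (bas H01CCd) = hi_HC m i.+1.
Proof.
rewrite (sandwich_bas (hi_H01CC_raw _ _ _ _)) /hi_HC /loop_term.
rewrite shiftl_down_run add0n flipl_down_run addn1 -down_run_rcons.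
by congr (_ *: bas (strand_loops _ _ _)); lia.
Qed.

Lemma hi_ctx_H02H01 m i : hi_ctx m i (bas H02H01d) = bas (hi_HH m.+1 i).
Proof.
rewrite (sandwich_bas (hi_H02H01_raw _ _ _ _)) expr0 scale1r /hi_HH.
rewrite shiftl_down_run add0n addn2 down_run_cons add0n.
by congr (bas (strand _ _)); lia.
Qed.

Lemma hi_ctx_X0H01 m i : hi_ctx m i (bas X0H01d) = bas (hi_HX m.+1 i).
Proof.
rewrite (sandwich_bas (hi_X0H01_raw _ _ _ _)) expr0 scale1r /hi_HX.
rewrite shiftl_down_run add0n flipl_down_run addn1 up_run_rcons add0n.
by congr (bas (strand _ _)); lia.
Qed.

Lemma hi_ctx_CCH01 m i :
  hi_ctx m i (bas CCH01d) = loop_term (down_run m.+1 i) (rot m (up_run 0 m.+1)) (m.+1 + i)%N.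
Proof.
rewrite (sandwich_bas (hi_CCH01_raw _ _ _ _)) /loop_term rot_up_run.
rewrite shiftl_down_run add0n flipl_down_run addn1.
by congr (_ *: bas (strand_loops _ _ _)); lia.
Qed.

Lemma hi_step m i : ABeq delta 1 1 (hi_sum m i.+1) (hi_sum m.+1 i).
Proof.
have fourT_hi := ABeq_closed_fourT
  (rel_ideal_sandwich (RI_4T delta) (isT : wfB 1 1 idd1) (wf_hi_top i) (wf_hi_bot m))
  (hi_ctx_H01H02 m i) (hi_ctx_H01X0 m i) (hi_ctx_H01CC m i)
  (hi_ctx_H02H01 m i) (hi_ctx_X0H01 m i) (hi_ctx_CCH01 m i).
have rot_hi : ABeq delta 1 1 (loop_term (down_run m.+1 i) (rot m (up_run 0 m.+1)) (m.+1 + i)%N)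
                             (hi_HC m.+1 i).
  apply: ABeq_loop_rot.
  by rewrite map_cat map_fst_down_run map_fst_up_run perm_iota_cat_rev.
by apply: ABeq_comb fourT_hi (ABeq_sym rot_hi) _; rewrite /hi_sum; freeg_ring.
Qed.

Lemma hi_sum_0l l :
  hi_sum 0 l = bas (strand (down_run 1 l ++ [:: (0%N, true)]) l.+1)
               + (bas (strand (down_run 0 l) l) - delta *: bas (strand (down_run 0 l) l)).
Proof. by rewrite /hi_sum /hi_HH /hi_HX /hi_HC /loop_term !down_run0 !up_run0 cats0 expr1. Qed.

Lemma hi_sum_l0 l :
  hi_sum l 0 = bas (strand (down_run 0 l ++ [:: (l, true)]) l.+1)
               + (bas (strand (up_run 0 l) l) - loop_term [::] (up_run 0 l) l).
Proof. by rewrite /hi_sum /hi_HH /hi_HX /hi_HC !down_run0 !addn0. Qed.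

Lemma Phi_transp_Hpow_rel l :
  ABeq delta 1 1
    (transp delta (Hpow delta l.+1) - mcomp (Phi delta) (transp delta (Hpow delta l)) - Gl delta l) 0.
Proof.
rewrite /Gl Phi_transp_Hpow transp_Hpow Zl_tens_I Hpow_strand down_run_rcons.
apply: ABeq_comb (skew_back l) (ABeq_sym (ABeq_telescope l hi_step)) _.
by rewrite hi_sum_0l hi_sum_l0; freeg_ring.
Qed.

Lemma Hm_transp_Hpow_commute l :
  ABeq delta 1 1 (bas (strand ((0%N, true) :: down_run 1 l) l.+1))
                 (bas (strand (down_run 0 l ++ [:: (l, true)]) l.+1)).
Proof.
apply: ABeq_comb (transp_Hpow_Phi_rel l) (ABeq_sym (Phi_transp_Hpow_rel l)) _.
by rewrite transp_Hpow_Phi Phi_transp_Hpow; freeg_ring.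
Qed.

Lemma Hpow_transp_Hpow_commute k l :
  ABeq delta 1 1 (bas (strand (down_run 0 l ++ up_run l k) (l + k)))
                 (bas (strand (up_run 0 k ++ down_run k l) (k + l))).
Proof.
elim: k => [|k IHk]; first by rewrite up_run0 cats0 addn0; apply: ABeq_refl.
have left_H := RI_compl IHk (isT : wf 1 1 Hd).
rewrite mcompBr -/(Hm K) !mcomp_Hm_strand -!catA -up_run_rcons in left_H.
have right_H := RI_compr (Hm_transp_Hpow_commute l) (wf_strand_up_run k).
rewrite mcompBl !mcomp_strand -cat1s !shiftl_cat !shiftl_down_run add0n !shiftl_seq1 in right_H.
rewrite catA -up_run_rcons (addnC l k) addnS in right_H.
by rewrite addnS; apply: ABeq_trans left_H (ABeq_sym right_H).
Qed.

End PolarBrauer.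

Local Open Scope ring_scope.

Theorem lemma2p16 (K : comNzRingType) (delta : K) :
  (forall l : nat,
     ABeq delta 1 1
       (transp delta (Hpow delta l.+1) - mcomp delta (transp delta (Hpow delta l)) (Phi delta)
          - Gl delta l) 0
  /\ ABeq delta 1 1
       (transp delta (Hpow delta l.+1) - mcomp delta (Phi delta) (transp delta (Hpow delta l))
          - Gl delta l) 0)
  /\ (forall k l : nat,
        ABeq delta 1 1 (mcomp delta (Hpow delta k) (transp delta (Hpow delta l)))
                       (mcomp delta (transp delta (Hpow delta l)) (Hpow delta k))).
Proof.
split=> [l|k l]; first by split; [exact: transp_Hpow_Phi_rel | exact: Phi_transp_Hpow_rel].
rewrite transp_Hpow Hpow_strand !mcomp_strand shiftl_up_run shiftl_down_run !add0n.
exact: Hpow_transp_Hpow_commute.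
Qed.
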